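(* Let $(V,E)$ be a finite graph and $p\in[0,1]$. Define rates on $\{0,1\}^E\times\{-1,1\}^V$ as follows: (a) if $\sigma'=\sigma$ and there is $e\in E$ with $\eta'=\eta^e$ and $\gamma_\eta(e)=1$, then $c((\eta,\sigma),(\eta',\sigma'))=\big((1-p)\mathbf 1_{\eta(e)=1}+p\mathbf 1_{\eta(e)=0}\big)\mathbf 1_{(\eta,\sigma)\in\mathcal C}$; (b) if $\sigma'=\sigma$ and there is $e\in E$ with $\eta'=\eta^e$, $\gamma_\eta(e)=0$ and $\delta_\sigma(e)=1$, then $c((\eta,\sigma),(\eta',\sigma'))=\frac12\big((1-p)\mathbf 1_{\eta(e)=1}+p\mathbf 1_{\eta(e)=0}\big)\mathbf 1_{(\eta,\sigma)\in\mathcal C}$; (c) if there are $x\in V$ and $e\in E_x$ with $\eta'=\eta^e$, $\gamma_\eta(e)=0$, $\eta(e)=\delta_\sigma(e)$, and $\sigma'(y)=-\sigma(y)$ for the vertices $y$ connected to $x$ by an open path of $\eta$ not using $e$ (including $y=x$), $\sigma'(y)=\sigma(y)$ otherwise, then $c((\eta,\sigma),(\eta',\sigma'))=\frac14\big((1-p)\mathbf 1_{\eta(e)=1}\mathbf 1_{(\eta,\sigma)\in\mathcal C}+p\mathbf 1_{\eta(e)=0}\mathbf 1_{(\eta',\sigma')\in\mathcal C}\big)$; (d) all other off-diagonal rates are $0$, and diagonal rates are minus the sum of off-diagonal rates of the row. Then these rates satisfy the detailed balance equation $IP(\eta,\sigma)c((\eta,\sigma),(\eta',\sigma'))=IP(\eta',\sigma')c((\eta',\sigma'),(\eta,\sigma))$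 for all pairs of states.
   Context: Edge configurations $\eta\in\{0,1\}^E$ (1 = open), spin configurations $\sigma\in\{-1,1\}^V$. For $e=\langle x,y\rangle$, $\delta_\sigma(e)=\mathbf 1_{\sigma(x)=\sigma(y)}$. $\mathcal C=\{(\eta,\sigma):\eta(e)\le\delta_\sigma(e)\ \forall e\in E\}$. $IP(\eta,\sigma)=\frac1Z\prod_{e\in E}\big(p\mathbf 1_{\eta(e)=1}\delta_\sigma(e)+(1-p)\mathbf 1_{\eta(e)=0}\big)$ with $Z$ the normalizing constant. $E_x$ is the set of edges with endvertex $x$; $\eta^e$ is $\eta$ with the value at $e$ changed. For $e=\langle x,y\rangle$, $\gamma_\eta(e)=1$ if $x,y$ are connected by a path of open edges of $\eta$ not using $e$, and $0$ otherwise. *)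

From mathcomp Require Import all_boot all_order all_algebra.
Set Implicit Arguments. Unset Strict Implicit. Unset Printing Implicit Defensive.
Import Order.TTheory GRing.Theory Num.Theory.
Local Open Scope ring_scope.

Section FKG.
Variables (R : realFieldType) (V E : finType) (src tgt : E -> V) (p : R).

(* edge configurations eta : E -> bool (true = open);
   spin configurations sigma : V -> bool (true = +1, false = -1) *)
Definition state := ({ffun E -> bool} * {ffun V -> bool})%type.

Definition delta (sigma : {ffun V -> bool}) (e : E) : bool :=
  sigma (src e) == sigma (tgt e).

Definition eflip (eta : {ffun E -> bool}) (e : E) : {ffun E -> bool} :=
  [ffun f => if f == e then ~~ eta f else eta f].

Definition open_adj (eta : {ffun E -> bool}) (e : E) : rel V :=
  fun u v => [exists f, [&& f != e, eta f &
     ((src f == u) && (tgt f == v)) || ((src f == v) && (tgt f == u))]].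

Definition conn_wo (eta : {ffun E -> bool}) (e : E) (u v : V) : bool :=
  connect (open_adj eta e) u v.

Definition gamma (eta : {ffun E -> bool}) (e : E) : bool :=
  conn_wo eta e (src e) (tgt e).

Definition inC (s : state) : bool := [forall e, s.1 e ==> delta s.2 e].

Definition cflip (eta : {ffun E -> bool}) (e : E) (x : V)
  (sigma : {ffun V -> bool}) : {ffun V -> bool} :=
  [ffun y => if conn_wo eta e x y then ~~ sigma y else sigma y].

Definition b2r (b : bool) : R := if b then 1 else 0.

Definition weight (s : state) : R :=
  \prod_(e : E) (p * b2r (s.1 e) * b2r (delta s.2 e) + (1 - p) * b2r (~~ s.1 e)).
Definition Zpart : R := \sum_(s : state) weight s.
Definition IP (s : state) : R := weight s / Zpart.

(* rate of an off-diagonal transition through the (unique) edge e with eta' = eta^e *)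
Definition edge_rate (s s' : state) (e : E) : R :=
  let: (eta, sigma) := s in let: (eta', sigma') := s' in
  let A := (1 - p) * b2r (eta e) + p * b2r (~~ eta e) in
  if sigma' == sigma then
    (if gamma eta e then A * b2r (inC s)
     else if delta sigma e then (1 / 2) * A * b2r (inC s)
     else 0)
  else if [&& ~~ gamma eta e, eta e == delta sigma e &
            [exists x, ((src e == x) || (tgt e == x)) &&
                       (sigma' == cflip eta e x sigma)]] then
    (1 / 4) * ((1 - p) * b2r (eta e) * b2r (inC s)
               + p * b2r (~~ eta e) * b2r (inC s'))
  else 0.

Definition offrate (s s' : state) : R :=
  match [pick e | s'.1 == eflip s.1 e] with
  | Some e => edge_rate s s' e
  | None => 0
  end.

Definition rate (s s' : state) : R :=
  if s == s' then - \sum_(t : state | t != s) offrate s t else offrate s s'.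

End FKG.

From mathcomp Require Import all_boot all_order all_algebra.
From mathcomp Require Import ring.
Import Order.TTheory GRing.Theory Num.Theory.
Local Open Scope ring_scope.

(** The weight of a configuration is a product of edge factors, and a
    transition from (η, σ) to (η^e, σ') happens through a single edge e.
    Neither kind of move changes δ on the open edges of η other than e: with
    σ fixed trivially, and for a cluster flip because a cluster of η without e
    contains both endpoints of such an edge or neither. Hence the two weights
    differ only in the factor of e, and detailed balance reduces to a finite
    case check on η(e), δ_σ(e), γ_η(e) and the consistency of σ off e. In that
    check, γ_η(e) = 1 forces δ_σ(e) = 1 on consistent configurations, and
    when γ_η(e) = 0 exactly one endpoint of e lies in the flipped cluster, so
    a cluster flip toggles δ_σ(e). *)

Set Implicit Arguments. Unset Strict Implicit. Unset Printing Implicit Defensive.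

Section ClusterMoves.
Variables (V E : finType) (src tgt : E -> V).
Implicit Types (eta : {ffun E -> bool}) (sigma : {ffun V -> bool}) (e f : E) (x u v : V).

Local Notation delta := (delta src tgt).
Local Notation open_adj := (open_adj src tgt).
Local Notation conn_wo := (conn_wo src tgt).
Local Notation gamma := (gamma src tgt).
Local Notation cflip := (cflip src tgt).
Local Notation inC := (inC src tgt).

Lemma eflip_at eta e : eflip eta e e = ~~ eta e.
Proof. by rewrite ffunE eqxx. Qed.

Lemma eflip_ne eta e f : f != e -> eflip eta e f = eta f.
Proof. by move=> ne_fe; rewrite ffunE (negbTE ne_fe). Qed.

Lemma eflipK eta e : eflip (eflip eta e) e = eta.
Proof. by apply/ffunP=> f; rewrite !ffunE; case: eqP => // ->; rewrite negbK. Qed.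

Lemma open_adj_sym eta e : symmetric (open_adj eta e).
Proof. by move=> u v; apply: eq_existsb => f; rewrite orbC. Qed.

Lemma open_adj_eflip eta e : open_adj (eflip eta e) e =2 open_adj eta e.
Proof.
move=> u v; apply: eq_existsb => f.
by case: (boolP (f != e)) => //= ne_fe; rewrite eflip_ne.
Qed.

Lemma conn_wo_sym eta e u v : conn_wo eta e u v = conn_wo eta e v u.
Proof. exact/sym_connect_sym/open_adj_sym. Qed.

Lemma conn_wo_eflip eta e : conn_wo (eflip eta e) e =2 conn_wo eta e.
Proof. exact/eq_connect/open_adj_eflip. Qed.

Lemma gamma_eflip eta e : gamma (eflip eta e) e = gamma eta e.
Proof. exact: conn_wo_eflip. Qed.

Lemma cflipK eta e x : involutive (cflip eta e x).
Proof. by move=> sigma; apply/ffunP=> y; rewrite /cflip !ffunE; case: conn_wo; rewrite ?negbK. Qed.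

Lemma cflip_eflip eta e x : cflip (eflip eta e) e x =1 cflip eta e x.
Proof. by move=> sigma; apply/ffunP=> y; rewrite /cflip !ffunE conn_wo_eflip. Qed.

Lemma cflip_delta_open eta e x sigma f :
  f != e -> eta f -> delta (cflip eta e x sigma) f = delta sigma f.
Proof.
move=> ne_fe eta_f; rewrite /delta !ffunE.
have adj_f : open_adj eta e (src f) (tgt f).
  by apply/existsP; exists f; rewrite ne_fe eta_f !eqxx.
have -> : conn_wo eta e x (tgt f) = conn_wo eta e x (src f).
  by apply/idP/idP => conn_x; apply: connect_trans conn_x _; apply: connect1;
     rewrite // open_adj_sym.
by case: ifP => //= _; case: (sigma (src f)); case: (sigma (tgt f)).
Qed.

Lemma cflip_delta_at eta e x sigma :
  ~~ gamma eta e -> (src e == x) || (tgt e == x) ->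
  delta (cflip eta e x sigma) e = ~~ delta sigma e.
Proof.
rewrite /gamma => /negbTE gamma0 end_x; have conn_xx : conn_wo eta e x x := connect0 _ x.
case/orP: end_x conn_xx => /eqP <- conn_xx; rewrite /delta /cflip !ffunE conn_xx.
  by rewrite gamma0; case: (sigma (src e)); case: (sigma (tgt e)).
by rewrite conn_wo_sym gamma0; case: (sigma (src e)); case: (sigma (tgt e)).
Qed.

Definition consistent_off eta sigma e := [forall f, (f != e) ==> eta f ==> delta sigma f].

Lemma inCE eta sigma e :
  inC (eta, sigma) = (eta e ==> delta sigma e) && consistent_off eta sigma e.
Proof.
apply/forallP/andP => [inC_s | [inC_e /forallP inC_off] f].
  by split; [exact: inC_s | apply/forallP => f; apply/implyP => _; exact: inC_s].
by case: (eqVneq f e) => [-> // | ne_fe]; exact: implyP (inC_off f) ne_fe.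
Qed.

Lemma consistent_off_eflip eta sigma e :
  consistent_off (eflip eta e) sigma e = consistent_off eta sigma e.
Proof. by apply: eq_forallb => f; case: (boolP (f != e)) => //= ne_fe; rewrite eflip_ne. Qed.

Lemma consistent_off_conn eta sigma e u v :
  consistent_off eta sigma e -> conn_wo eta e u v -> sigma u = sigma v.
Proof.
move=> /forallP cons; apply: closed_connect => y z /existsP[f /and3P[ne_fe eta_f adj]].
have /eqP := implyP (implyP (cons f) ne_fe) eta_f.
by rewrite -!topredE /=; case/orP: adj => /andP[/eqP-> /eqP->] ->.
Qed.

Lemma consistent_gamma_delta eta sigma e :
  consistent_off eta sigma e -> gamma eta e -> delta sigma e.
Proof. by move=> cons /(consistent_off_conn cons) sigma_e; rewrite /delta sigma_e. Qed.

Definition cluster_move eta sigma sigma' e :=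
  [&& ~~ gamma eta e, eta e == delta sigma e &
     [exists x, ((src e == x) || (tgt e == x)) && (sigma' == cflip eta e x sigma)]].

Lemma eq_eflip_sym eta eta' e : (eta == eflip eta' e) = (eta' == eflip eta e).
Proof. by apply/eqP/eqP => ->; rewrite eflipK. Qed.

Lemma cluster_move_eflip eta sigma sigma' e :
  cluster_move eta sigma sigma' e -> cluster_move (eflip eta e) sigma' sigma e.
Proof.
case/and3P=> gamma0 /eqP eta_e /existsP[x /andP[end_x /eqP->]].
rewrite /cluster_move gamma_eflip gamma0 eflip_at cflip_delta_at // eta_e eqxx /=.
by apply/existsP; exists x; rewrite end_x cflip_eflip cflipK eqxx.
Qed.

Lemma cluster_move_eflipE eta sigma sigma' e :
  cluster_move (eflip eta e) sigma' sigma e = cluster_move eta sigma sigma' e.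
Proof.
apply/idP/idP => [/cluster_move_eflip | ]; last exact: cluster_move_eflip.
by rewrite eflipK.
Qed.

End ClusterMoves.

Section DetailedBalance.
Variables (R : realFieldType) (V E : finType) (src tgt : E -> V) (p : R).
Implicit Types (eta : {ffun E -> bool}) (sigma : {ffun V -> bool}) (e f : E).

Local Notation delta := (delta src tgt).
Local Notation gamma := (gamma src tgt).
Local Notation inC := (inC src tgt).
Local Notation consistent_off := (consistent_off src tgt).
Local Notation cluster_move := (cluster_move src tgt).
Local Notation weight := (weight src tgt p).
Local Notation edge_rate := (edge_rate src tgt p).
Local Notation b2r := (b2r R).

Definition edge_weight (a d : bool) : R := p * b2r a * b2r d + (1 - p) * b2r (~~ a).

Lemma weight_edge eta sigma e :
  weight (eta, sigma) =
  edge_weight (eta e) (delta sigma e) * \prod_(f | f != e) edge_weight (eta f) (delta sigma f).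
Proof. exact: bigD1. Qed.

Lemma weight_off_eflip eta sigma sigma' e :
  (forall f, f != e -> eta f -> delta sigma' f = delta sigma f) ->
  \prod_(f | f != e) edge_weight (eflip eta e f) (delta sigma' f) =
  \prod_(f | f != e) edge_weight (eta f) (delta sigma f).
Proof.
move=> delta_open; apply: eq_bigr => f ne_fe; rewrite eflip_ne //.
case: (boolP (eta f)) => [eta_f | _]; first by rewrite delta_open.
by rewrite /edge_weight /b2r mulr0 !mul0r.
Qed.

Lemma balance_fixed_spins eta sigma e :
  weight (eta, sigma) * edge_rate (eta, sigma) (eflip eta e, sigma) e =
  weight (eflip eta e, sigma) * edge_rate (eflip eta e, sigma) (eta, sigma) e.
Proof.
rewrite !(weight_edge _ _ e) (@weight_off_eflip eta sigma) // /edge_rate /= eqxx eflip_at gamma_eflip.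
rewrite !(inCE src tgt _ _ e) consistent_off_eflip eflip_at.
have gamma_delta := @consistent_gamma_delta _ _ src tgt eta sigma e.
case: (gamma eta e) (eta e) (delta sigma e) (consistent_off eta sigma e) gamma_delta
  => [] [] [] [] gamma_delta; rewrite /edge_weight /b2r /=; try ring.
(* left: γ_η(e) = 1 and σ consistent off e, yet δ_σ(e) = 0 *)
all: by have := gamma_delta isT isT.
Qed.

Lemma edge_rate_spin_flip eta sigma eta' sigma' e :
  sigma' != sigma ->
  edge_rate (eta, sigma) (eta', sigma') e =
  if cluster_move eta sigma sigma' e then
    (1 / 4) * ((1 - p) * b2r (eta e) * b2r (inC (eta, sigma))
               + p * b2r (~~ eta e) * b2r (inC (eta', sigma')))
  else 0.
Proof. by move=> /negbTE ne_sigma; rewrite /edge_rate ne_sigma. Qed.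

Lemma balance_cluster_move eta sigma sigma' e :
  cluster_move eta sigma sigma' e ->
  weight (eta, sigma) * edge_rate (eta, sigma) (eflip eta e, sigma') e =
  weight (eflip eta e, sigma') * edge_rate (eflip eta e, sigma') (eta, sigma) e.
Proof.
move=> move_e; case/and3P: (move_e) => gamma0 /eqP eta_e /existsP[x /andP[end_x /eqP sigma'E]].
have ne_sigma : sigma' != sigma.
  by apply/eqP => /ffunP/(_ x); rewrite sigma'E /cflip ffunE /conn_wo connect0; case: (sigma x).
rewrite !edge_rate_spin_flip ?(eq_sym sigma) // move_e cluster_move_eflip //.
rewrite !(weight_edge _ _ e) (@weight_off_eflip eta sigma sigma') => [|f ne_fe eta_f]; last first.
  by rewrite sigma'E cflip_delta_open.
rewrite eflip_at sigma'E cflip_delta_at // -eta_e.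
by case: (eta e) (inC _) (inC _) => [] [] []; rewrite /edge_weight /b2r /=; ring.
Qed.

Lemma balance_edge eta sigma sigma' e :
  weight (eta, sigma) * edge_rate (eta, sigma) (eflip eta e, sigma') e =
  weight (eflip eta e, sigma') * edge_rate (eflip eta e, sigma') (eta, sigma) e.
Proof.
have [-> | ne_sigma] := eqVneq sigma' sigma; first exact: balance_fixed_spins.
have [move_e | no_move] := boolP (cluster_move eta sigma sigma' e).
  exact: balance_cluster_move.
rewrite !edge_rate_spin_flip ?(eq_sym sigma) // cluster_move_eflipE.
by rewrite (negbTE no_move) !mulr0.
Qed.

End DetailedBalance.

Theorem proposition7 (R : realFieldType) (V E : finType) (src tgt : E -> V)
  (no_loop : forall e, src e != tgt e)
  (no_multi : forall e f,
     ((src e == src f) && (tgt e == tgt f)) || ((src e == tgt f) && (tgt e == src f)) ->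
     e = f)
  (p : R) (hp : 0 <= p <= 1) :
  forall s s' : state V E,
    IP src tgt p s * rate src tgt p s s' = IP src tgt p s' * rate src tgt p s' s.
Proof.
(* The identity is algebraic in p and holds on multigraphs with loops as well. *)
move=> s s'; rewrite /rate; have [-> // | _] := eqVneq s s'.
rewrite /offrate (eq_pick (fun e => eq_eflip_sym s.1 s'.1 e)).
case: pickP => [e /eqP s'_eflip | _]; last by rewrite !mulr0.
case: s s'_eflip => eta sigma; case: s' => _ sigma' /= ->.
by rewrite /IP mulrAC [RHS]mulrAC balance_edge.
Qed.
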